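(* Let $\mathbf{E},\mathbf{Y}$ be Euclidean spaces, $\mathcal{X}\subset\mathbf{E}$ nonempty closed convex, $h\colon\mathbf{Y}\to\mathbb{R}$ convex, $F\colon\mathbf{E}\to\mathbf{Y}$ continuously differentiable, $f=h\circ F$, $f_x(y)=h(F(x)+\nabla F(x)(y-x))$. Assume $\mathcal{X}^*=\operatorname{argmin}_{\mathcal{X}}f\neq\emptyset$, that $f(x)-\min_{\mathcal{X}}f\ge\mu\,\mathrm{dist}(x,\mathcal{X}^* )$ for all $x\in\mathcal{X}$ for some $\mu>0$, and that for some reals $a>0$, $b\ge0$, $$|f(y)-f_x(y)|\le a\|y-x\|^2+b\|y-x\|\quad\forall x,y\in\mathcal{X}.$$ Let $x_0\in\mathcal{X}$ and let $x_{k+1}$ be any minimizer of $x\mapsto f_{x_k}(x)+a\|x-x_k\|^2+b\|x-x_k\|$ over $\mathcal{X}$. If $\mathrm{dist}(x_0,\mathcal{X}^* )\le\frac{\mu-2b}{2a}$, then for all $k\ge0$, $$\mathrm{dist}(x_{k+1},\mathcal{X}^* )\le\frac{2\big(b+a\,\mathrm{dist}(x_k,\mathcal{X}^* )\big)}{\mu}\,\mathrm{dist}(x_k,\mathcal{X}^* ).$$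
   Context: $\|\cdot\|$ is the Euclidean norm on $\mathbf{E}$, $\mathrm{dist}$ the Euclidean distance, and $\nabla F(x)$ the Jacobian of $F$ at $x$. *)

(* real analysis over Stdlib's R.
   A Euclidean space of dimension n is modelled as R^n = (Fin.t n -> R)
   with the standard vinner product. *)
From Stdlib Require Import Reals Lra Classical ClassicalEpsilon.
From Stdlib Require Vectors.Fin.
Open Scope R_scope.

Definition vec (n : nat) := Fin.t n -> R.

Fixpoint vsum (n : nat) : vec n -> R :=
  match n return vec n -> R with
  | O => fun _ => 0
  | S m => fun v => v Fin.F1 + vsum m (fun i => v (Fin.FS i))
  end.

Definition vadd {n} (u v : vec n) : vec n := fun i => u i + v i.
Definition vsub {n} (u v : vec n) : vec n := fun i => u i - v i.
Definition vscale {n} (t : R) (u : vec n) : vec n := fun i => t * u i.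
Definition vinner {n} (u v : vec n) : R := vsum n (fun i => u i * v i).
Definition vnorm {n} (u : vec n) : R := sqrt (vinner u u).

Definition matapp {m n} (A : Fin.t m -> Fin.t n -> R) (v : vec n) : vec m :=
  fun i => vsum n (fun j => A i j * v j).

Definition is_inf (P : R -> Prop) (d : R) : Prop :=
  (forall r, P r -> d <= r) /\ (forall d', (forall r, P r -> d' <= r) -> d' <= d).

Definition Rinf (P : R -> Prop) : R := epsilon (inhabits 0) (is_inf P).

Definition vdist {n} (S : vec n -> Prop) (x : vec n) : R :=
  Rinf (fun r => exists y, S y /\ r = vnorm (vsub x y)).

Definition convex_vset {n} (S : vec n -> Prop) : Prop :=
  forall x y t, S x -> S y -> 0 <= t <= 1 ->
    S (vadd (vscale t x) (vscale (1 - t) y)).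

Definition closed_vset {n} (S : vec n -> Prop) : Prop :=
  forall x, ~ S x -> exists eps, 0 < eps /\
    forall y, vnorm (vsub y x) < eps -> ~ S y.

Definition convex_vfun {m} (h : vec m -> R) : Prop :=
  forall u v t, 0 <= t <= 1 ->
    h (vadd (vscale t u) (vscale (1 - t) v)) <= t * h u + (1 - t) * h v.

Definition has_jacobian {n m} (F : vec n -> vec m)
  (J : vec n -> Fin.t m -> Fin.t n -> R) : Prop :=
  forall x eps, 0 < eps -> exists delta, 0 < delta /\
    forall y, vnorm (vsub y x) < delta ->
      vnorm (vsub (vsub (F y) (F x)) (matapp (J x) (vsub y x)))
        <= eps * vnorm (vsub y x).

Definition continuous_jacobian {n m} (J : vec n -> Fin.t m -> Fin.t n -> R) : Prop :=
  forall x i j eps, 0 < eps -> exists delta, 0 < delta /\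
    forall y, vnorm (vsub y x) < delta -> Rabs (J y i j - J x i j) < eps.

Definition vargmin {n} (f : vec n -> R) (S : vec n -> Prop) : vec n -> Prop :=
  fun x => S x /\ forall y, S y -> f x <= f y.

(* Let x' minimize the regularized model  y |-> f_x(y) + a|y-x|^2 + b|y-x|  over
   X, and let y be any minimizer of f over X.  Chaining sharpness at x', the
   model error bound at (x, x'), the minimality of x' tested against y, and the
   model error bound at (x, y) gives
       mu * dist(x', Xs) <= 2a |x - y|^2 + 2b |x - y|.
   The right-hand side is a nondecreasing function of |x - y|, so taking the
   infimum over y in Xs replaces |x - y| by dist(x, Xs); dividing by mu yields
   the claimed bound. *)
From Stdlib Require Import Reals Lra ClassicalEpsilon.
Open Scope R_scope.

Lemma vsum_ext (n : nat) (u v : vec n) :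
  (forall i, u i = v i) -> vsum n u = vsum n v.
Proof.
  induction n as [|n IH]; intros Huv; simpl; [reflexivity|].
  rewrite Huv; f_equal; apply IH; intros i; apply Huv.
Qed.

Lemma vnorm_sub_sym (n : nat) (x y : vec n) : vnorm (vsub x y) = vnorm (vsub y x).
Proof.
  unfold vnorm, vinner; f_equal; apply vsum_ext; intros i; unfold vsub; ring.
Qed.

Lemma Rinf_spec (P : R -> Prop) :
  (exists r, P r) -> (forall r, P r -> 0 <= r) -> is_inf P (Rinf P).
Proof.
  intros [r0 Hr0] Hnonneg.
  unfold Rinf; apply epsilon_spec.
  destruct (completeness (fun s => P (- s))) as [l [Hub Hlub]].
  - exists 0; intros s Hs; specialize (Hnonneg _ Hs); lra.
  - exists (- r0); rewrite Ropp_involutive; exact Hr0.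
  - exists (- l); split.
    + intros r Hr.
      assert (- r <= l) by (apply Hub; rewrite Ropp_involutive; exact Hr); lra.
    + intros d' Hd'.
      assert (l <= - d') by (apply Hlub; intros s Hs; specialize (Hd' _ Hs); lra); lra.
Qed.

Lemma is_inf_approx (P : R -> Prop) (d e : R) :
  is_inf P d -> 0 < e -> exists r, P r /\ r < d + e.
Proof.
  intros [_ Hglb] He.
  apply NNPP; intros Hnone.
  assert (d + e <= d); [|lra].
  apply Hglb; intros r Hr.
  apply Rnot_lt_le; intros Hlt; apply Hnone; exists r; split; assumption.
Qed.

(* A lower bound c <= a r^2 + b r (a, b >= 0) valid on a set of reals passes to
   its infimum d >= 0: the quadratic is nondecreasing and continuous on [0, oo). *)
Lemma quadratic_bound_at_inf (P : R -> Prop) (d c a b : R) :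
  is_inf P d -> 0 <= d -> 0 <= a -> 0 <= b ->
  (forall r, P r -> 0 <= r) ->
  (forall r, P r -> c <= a * r ^ 2 + b * r) ->
  c <= a * d ^ 2 + b * d.
Proof.
  intros Hinf Hd Ha Hb Hnonneg Hbound.
  apply Rnot_lt_le; intros Hgap.
  set (gap := c - (a * d ^ 2 + b * d)).
  set (K := 2 * a * d + a + b + 1).
  (* On [d, d + e] with e <= 1 the quadratic grows by at most e * K. *)
  set (e := Rmin 1 (gap / (2 * K))).
  assert (HK : 0 < K) by (unfold K; nra).
  assert (He : 0 < e).
  { apply Rmin_glb_lt; [lra|].
    apply Rdiv_lt_0_compat; unfold gap; lra. }
  assert (He1 : e <= 1) by apply Rmin_l.
  assert (HeK : e * K <= gap / 2).
  { assert (e <= gap / (2 * K)) as Hle by apply Rmin_r.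
    apply Rmult_le_compat_r with (r := K) in Hle; [|lra].
    replace (gap / (2 * K) * K) with (gap / 2) in Hle by (field; lra).
    exact Hle. }
  destruct (is_inf_approx P d e Hinf He) as [r [Hr Hlt]].
  pose proof (Hbound r Hr) as Hc.
  pose proof (Hnonneg r Hr) as Hr0.
  assert (Hgrowth : a * r ^ 2 + b * r <= a * d ^ 2 + b * d + e * K).
  { assert (Hsq : r * r <= (d + e) * (d + e)) by nra.
    assert (a * (r * r) <= a * ((d + e) * (d + e))) by (apply Rmult_le_compat_l; lra).
    assert (b * r <= b * (d + e)) by (apply Rmult_le_compat_l; lra).
    assert (a * e * e <= a * e) by (rewrite <- (Rmult_1_r (a * e)) at 2; apply Rmult_le_compat_l; nra).
    unfold K; nra. }
  unfold gap in *; lra.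
Qed.

Lemma vdist_is_inf (n : nat) (S : vec n -> Prop) (x : vec n) :
  (exists y, S y) ->
  is_inf (fun r => exists y, S y /\ r = vnorm (vsub x y)) (vdist S x).
Proof.
  intros [y Hy]; apply Rinf_spec.
  - exists (vnorm (vsub x y)); exists y; split; [exact Hy | reflexivity].
  - intros r [z [_ ->]]; apply sqrt_pos.
Qed.

Lemma vdist_nonneg (n : nat) (S : vec n -> Prop) (x : vec n) :
  (exists y, S y) -> 0 <= vdist S x.
Proof.
  intros HS; apply (proj2 (vdist_is_inf n S x HS)).
  intros r [y [_ ->]]; apply sqrt_pos.
Qed.

Lemma quadratic_bound_at_vdist (n : nat) (S : vec n -> Prop) (x : vec n) (c a b : R) :
  (exists y, S y) -> 0 <= a -> 0 <= b ->
  (forall y, S y -> c <= a * vnorm (vsub x y) ^ 2 + b * vnorm (vsub x y)) ->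
  c <= a * vdist S x ^ 2 + b * vdist S x.
Proof.
  intros HS Ha Hb Hbound.
  apply (quadratic_bound_at_inf _ _ _ _ _ (vdist_is_inf n S x HS));
    [apply vdist_nonneg, HS | exact Ha | exact Hb | |].
  - intros r [y [_ ->]]; apply sqrt_pos.
  - intros r [y [Hy ->]]; apply Hbound, Hy.
Qed.

Lemma model_step_value_bound (n : nat) (X : vec n -> Prop) (f : vec n -> R)
  (model : vec n -> vec n -> R) (mu a b : R) (x x' y : vec n) :
  (forall z zstar, X z -> vargmin f X zstar ->
     f z - f zstar >= mu * vdist (vargmin f X) z) ->
  (forall z w, X z -> X w ->
     Rabs (f w - model z w) <= a * vnorm (vsub w z) ^ 2 + b * vnorm (vsub w z)) ->
  X x ->
  vargmin (fun w => model x w + a * vnorm (vsub w x) ^ 2 + b * vnorm (vsub w x)) X x' ->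
  vargmin f X y ->
  mu * vdist (vargmin f X) x' <=
    2 * a * vnorm (vsub x y) ^ 2 + 2 * b * vnorm (vsub x y).
Proof.
  intros Hsharp Hmodel Hx [Hx' Hmin] Hy.
  pose proof Hy as [HyX _].
  pose proof (Hsharp x' y Hx' Hy) as Hsharp_x'.
  pose proof (Hmin y HyX) as Hprox.
  pose proof (Hmodel x x' Hx Hx') as Herr_x'.
  pose proof (Hmodel x y Hx HyX) as Herr_y.
  pose proof (Rle_abs (f x' - model x x')) as Habs_x'.
  pose proof (Rle_abs (- (f y - model x y))) as Habs_y.
  rewrite Rabs_Ropp in Habs_y.
  rewrite (vnorm_sub_sym n x y); lra.
Qed.

Theorem lemma7p4 (n m : nat) (X : vec n -> Prop) (h : vec m -> R)
  (F : vec n -> vec m) (J : vec n -> Fin.t m -> Fin.t n -> R)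
  (mu a b : R) (xs : nat -> vec n) :
  (exists x : vec n, X x) -> closed_vset X -> convex_vset X ->
  convex_vfun h ->
  has_jacobian F J -> continuous_jacobian J ->
  let f := fun x : vec n => h (F x) in
  let fx := fun x y : vec n => h (vadd (F x) (matapp (J x) (vsub y x))) in
  let Xs := vargmin f X in
  (exists xs0 : vec n, Xs xs0) ->
  0 < mu ->
  (forall x xstar : vec n, X x -> Xs xstar -> f x - f xstar >= mu * vdist Xs x) ->
  0 < a -> 0 <= b ->
  (forall x y : vec n, X x -> X y ->
     Rabs (f y - fx x y) <= a * vnorm (vsub y x) ^ 2 + b * vnorm (vsub y x)) ->
  X (xs 0%nat) ->
  (forall k, vargmin (fun x : vec n => fx (xs k) x + a * vnorm (vsub x (xs k)) ^ 2
                              + b * vnorm (vsub x (xs k))) X (xs (S k))) ->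
  vdist Xs (xs 0%nat) <= (mu - 2 * b) / (2 * a) ->
  forall k, vdist Xs (xs (S k)) <=
    2 * (b + a * vdist Xs (xs k)) / mu * vdist Xs (xs k).
Proof.
  intros _ _ _ _ _ _ f fx Xs HXs Hmu Hsharp Ha Hb Hmodel H0 Hstep _ k.
  assert (HXk : X (xs k)) by (destruct k; [exact H0 | apply (Hstep k)]).
  assert (Hvalue : mu * vdist Xs (xs (S k)) <=
                   2 * a * vdist Xs (xs k) ^ 2 + 2 * b * vdist Xs (xs k)).
  { apply quadratic_bound_at_vdist; [exact HXs | lra | lra |].
    intros y Hy; exact (model_step_value_bound n X f fx mu a b _ _ y
                          Hsharp Hmodel HXk (Hstep k) Hy). }
  apply Rmult_le_reg_l with mu; [exact Hmu|].
  replace (mu * (2 * (b + a * vdist Xs (xs k)) / mu * vdist Xs (xs k)))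
    with (2 * a * vdist Xs (xs k) ^ 2 + 2 * b * vdist Xs (xs k)) by (field; lra).
  exact Hvalue.
Qed.
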